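(* For every approval-based participatory budgeting instance $I=(N,\mathcal{T},B,\mathrm{cost},\mathcal{A})$ and every nonempty set of projects $T\subseteq\mathcal{T}$, the proportionality degree of the Method of Equal Shares satisfies \[ d_{\textsc{mes}}(T)\;\geq\;\frac{1}{2}\left(\frac{\mathrm{cost}(T)}{\max_{t\in T}\mathrm{cost}(t)}-1\right). \]
   Context: An approval-based PB instance is $I=(N,\mathcal{T},B,\mathrm{cost},\mathcal{A})$: $N$ is a set of $n$ voters, $\mathcal{T}$ a finite set of projects, $B>0$ a budget, $\mathrm{cost}:\mathcal{T}\to\mathbb{R}_{>0}$, with $\mathrm{cost}(S)=\sum_{t\in S}\mathrm{cost}(t)$, and $\mathcal{A}=(A_i)_{i\in N}$ with $A_i\subseteq\mathcal{T}$ the projects approved by voter $i$. A PB rule $f$ maps each instance to a set $W=f(I)\subseteq\mathcal{T}$ with $\mathrm{cost}(W)\le B$. For $T\subseteq\mathcal{T}$, a group $V\subseteq N$ is $T$-cohesive if $T\subseteq\bigcap_{i\in V}A_i$ and $\mathrm{cost}(T)/B\le |V|/n$; $\mathcal{V}(T)$ denotes the set of all $T$-cohesive groups. The average satisfaction of $V$ w.r.t. $W$ is $\mathrm{avg}_W(V)=\frac{1}{|V|}\sum_{i\in V}|W\cap A_i|$. The proportionality degree of $f$ for $T$ (on instance $I$) is $d_f(T)=\sup\{g:\ \min_{V\in\mathcal{V}(T)}\mathrm{avg}_{f(I)}(V)\ge \min(|T|,g)\}$. Method of Equal Shares (\textsc{mes}): each voter starts with budget $B/n$; start with $W=\emptyset$.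 Let $\ell_i$ denote voter $i$'s remaining budget ($B/n$ minus what $i$ has paid so far) and $N_t=\{i\in N: t\in A_i\}$. For $\rho\ge 0$, a project $t\in\mathcal{T}\setminus W$ is $\rho$-affordable if $\sum_{i\in N_t}\min(\ell_i,\rho)=\mathrm{cost}(t)$. If no project is $\rho$-affordable for any $\rho$, \textsc{mes} stops and returns $W$; otherwise it adds to $W$ a project that is $\rho$-affordable for the minimum possible $\rho$ (ties broken arbitrarily), each $i\in N_t$ paying $\min(\ell_i,\rho)$, and repeats. *)

From HB Require Import structures.
From mathcomp Require Import all_boot all_order all_algebra.
From mathcomp Require Import all_classical all_reals ereal.
Set Implicit Arguments. Unset Strict Implicit. Unset Printing Implicit Defensive.
Import Order.TTheory GRing.Theory Num.Theory.
Local Open Scope ring_scope.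

Section PB.
Variables (R : realType) (N Proj : finType).
Variables (B : R) (cost : Proj -> R) (A : N -> {set Proj}).

Definition n_voters : R := #|N|%:R.

Definition costS (S : {set Proj}) : R := \sum_(t in S) cost t.

(* l i = remaining budget of voter i. *)
Definition affordable (l : N -> R) (t : Proj) (rho : R) : Prop :=
  0 <= rho /\ \sum_(i | t \in A i) Num.min (l i) rho = cost t.

Definition mes_step (W : {set Proj}) (l : N -> R)
                    (W' : {set Proj}) (l' : N -> R) : Prop :=
  exists t rho,
    [/\ t \notin W, affordable l t rho,
        (forall t' rho', t' \notin W -> affordable l t' rho' -> rho <= rho'),
        W' = t |: W
      & l' = fun i => if t \in A i then l i - Num.min (l i) rho else l i].

Inductive mes_reach : {set Proj} -> (N -> R) -> Prop :=
| mes_reach_init : mes_reach finset.set0 (fun _ => B / n_voters)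
| mes_reach_step W l W' l' :
    mes_reach W l -> mes_step W l W' l' -> mes_reach W' l'.

Definition mes_stopped (W : {set Proj}) (l : N -> R) : Prop :=
  forall t rho, t \notin W -> ~ affordable l t rho.

(* W is a possible output of MES (for some tie-breaking). *)
Definition mes_outcome (W : {set Proj}) : Prop :=
  exists l, mes_reach W l /\ mes_stopped W l.

Definition cohesive (T : {set Proj}) (V : {set N}) : Prop :=
  T \subset \bigcap_(i in V) A i /\ costS T / B <= #|V|%:R / n_voters.

Definition avg_sat (W : {set Proj}) (V : {set N}) : R :=
  (\sum_(i in V) #|W :&: A i|%:R) / #|V|%:R.

(* min over all T-cohesive groups of avg_sat >= min(|T|, g)
   (the min over an empty family is +oo, so this is vacuous then). *)
Definition degree_ok (W T : {set Proj}) (g : R) : Prop :=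
  forall V : {set N}, cohesive T V -> Num.min (#|T|%:R) g <= avg_sat W V.

Definition prop_degree (W T : {set Proj}) : \bar R :=
  ereal_sup [set g%:E | g in [set g : R | degree_ok W T g]]%classic.

Definition max_cost (T : {set Proj}) : R := \big[Num.max/0]_(t in T) cost t.

End PB.

From HB Require Import structures.
From mathcomp Require Import all_boot all_order all_algebra.
From mathcomp Require Import all_classical all_reals ereal topology normedtype.
From mathcomp Require Import ring lra.
Import Order.TTheory GRing.Theory Num.Theory.
Import numFieldNormedType.Exports.
Local Open Scope ring_scope.

(* Fix a T-cohesive group V of v voters, each starting with b = B/n, so that
   vb >= cost(T), and an unfunded t in T; let c = max cost on T.  Along the run
   of MES consider  Phi = 2c * sum_(i in V) |W ∩ A_i| + sum_(i,j in V) min(l_i, l_j),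
   which starts at v^2 b.  While t is still affordable, every purchase is made
   at a price rho at most the price of t, so V pays at most cost(t) <= c in
   total; if K members of V approve the purchased project, the pairwise-min
   term drops by at most 2cK while the satisfaction term grows by exactly 2cK.
   Once t stops being affordable, V holds less than c in total, so the
   pairwise-min term is at most vc and  v (vb - c) <= 2c sum_(i in V) |W ∩ A_i|,
   i.e. the average satisfaction of V is at least (cost(T)/c - 1) / 2. *)

Lemma continuous_sum_min (R : realType) (I : Type) (s : seq I) (P : pred I)
    (l : I -> R) :
  continuous (fun x : R => \sum_(i <- s | P i) Num.min (l i) x).
Proof.
have -> : (fun x : R => \sum_(i <- s | P i) Num.min (l i) x) =
          \sum_(i <- s | P i) (fun x => Num.min (l i) x).
  by apply/funext => x; rewrite fct_sumE.
apply: (big_ind (fun f : R -> R => continuous f)).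
- exact: cst_continuous.
- by move=> f g f_cont g_cont x; exact: continuousD (f_cont x) (g_cont x).
- by move=> i _ x; apply: (@continuous_min R R (cst (l i)) id x);
    [exact: cvg_cst | exact: cvg_id].
Qed.

Lemma ler_psum_subpred {R : numDomainType} {I : finType} {P Q : pred I}
    {F : I -> R} :
  (forall i, P i -> Q i) -> (forall i, 0 <= F i) ->
  \sum_(i | P i) F i <= \sum_(i | Q i) F i.
Proof.
move=> PQ F_ge0; rewrite [X in _ <= X](bigID P) /=.
have -> : \sum_(i | Q i && P i) F i = \sum_(i | P i) F i.
  by apply: eq_bigl => i; case Pi: (P i); rewrite ?andbF ?andbT ?PQ.
by rewrite lerDl; apply: sumr_ge0.
Qed.

Definition pay {I : Type} {R : numDomainType} (S : pred I) (rho : R)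
    (l : I -> R) : I -> R :=
  fun i => if S i then l i - Num.min (l i) rho else l i.

Lemma min_pay_le (R : realDomainType) (a b r : R) (sa sb : bool) :
  0 <= a -> 0 <= b -> 0 <= r ->
  Num.min a b - Num.min (if sa then a - Num.min a r else a)
                        (if sb then b - Num.min b r else b)
  <= sa%:R * Num.min b r + sb%:R * Num.min a r.
Proof.
move=> a_ge0 b_ge0 r_ge0; case: sa sb => [] []; rewrite /= ?mul1r ?mul0r.
all: do ![rewrite minEle; case: ifPn; rewrite -?ltNge => ?; try lra].
Qed.

Section PairwiseMin.
Context {R : realDomainType} {I : finType} (V : {set I}).

Definition pairmin (l : I -> R) : R :=
  \sum_(i in V) \sum_(j in V) Num.min (l i) (l j).

Lemma pairmin_cst (b : R) : pairmin (fun=> b) = #|V|%:R * #|V|%:R * b.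
Proof.
rewrite /pairmin; under eq_bigr do rewrite minxx sumr_const.
by rewrite sumr_const -mulrA !mulr_natl.
Qed.

Lemma pairmin_le_sum (l : I -> R) : pairmin l <= #|V|%:R * \sum_(j in V) l j.
Proof.
rewrite mulr_natl -sumr_const; apply: ler_sum => i _; apply: ler_sum => j _.
by rewrite ge_min lexx orbT.
Qed.

Lemma pairmin_pay (S : pred I) (rho : R) (l : I -> R) :
  (forall i, 0 <= l i) -> 0 <= rho ->
  pairmin l - pairmin (pay S rho l)
  <= 2 * (\sum_(i in V) Num.min (l i) rho) * \sum_(i in V) (S i)%:R.
Proof.
move=> l_ge0 rho_ge0; rewrite /pairmin -sumrB.
apply: (@le_trans _ _ (\sum_(i in V) \sum_(j in V)
   ((S i)%:R * Num.min (l j) rho + (S j)%:R * Num.min (l i) rho))).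
  apply: ler_sum => i _; rewrite -sumrB; apply: ler_sum => j _.
  rewrite /pay; exact: min_pay_le.
under eq_bigr do rewrite big_split /=.
rewrite big_split /= -big_distrlr /=.
under [X in _ + X <= _]eq_bigr do under eq_bigr do rewrite mulrC.
by rewrite -big_distrlr /= [X in X + _ <= _]mulrC -mulr2n -mulrnAl -mulr_natl.
Qed.
End PairwiseMin.

Definition total_sat {R : numDomainType} {N Proj : finType}
    (A : N -> {set Proj}) (V : {set N}) (W : {set Proj}) : R :=
  \sum_(i in V) #|W :&: A i|%:R.

Section MethodOfEqualShares.
Context {R : realType} {N Proj : finType}.
Context {B : R} {cost : Proj -> R} {A : N -> {set Proj}}.
Hypotheses (B_ge0 : 0 <= B) (cost_ge0 : forall t, 0 <= cost t).

Local Notation share := (B / n_voters R N).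

Lemma total_sat_setU1 (V : {set N}) (W : {set Proj}) (t : Proj) :
  t \notin W ->
  total_sat A V (t |: W) = total_sat A V W + \sum_(i in V) (t \in A i)%:R :> R.
Proof.
move=> tW; rewrite /total_sat -big_split /=; apply: eq_bigr => i _.
rewrite -natrD finset.setIUl; congr (_%:R); case tA: (t \in A i).
  by rewrite (finset.setIidPl _) ?finset.sub1set // cardsU1 inE (negbTE tW) addnC.
have -> : [set t] :&: A i = finset.set0.
  by apply/setP => x; rewrite !inE; case: eqP => // ->; rewrite tA.
by rewrite finset.set0U addn0.
Qed.

Lemma mes_reach_ge0 {W : {set Proj}} {l : N -> R} :
  mes_reach B cost A W l -> forall i, 0 <= l i.
Proof.
elim=> [|W0 l0 W1 l1 _ l0_ge0 [t [rho [_ _ _ _ ->]]]] i.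
  by apply: divr_ge0; rewrite ?ler0n.
by case: ifP => _ //; rewrite subr_ge0 ge_min lexx.
Qed.

Lemma exists_affordable {l : N -> R} {t : Proj} :
  (forall i, 0 <= l i) -> cost t <= \sum_(i | t \in A i) l i ->
  exists rho, affordable cost A l t rho.
Proof.
move=> l_ge0 cost_le.
pose f x := \sum_(i | t \in A i) Num.min (l i) x.
set M := \sum_(i | t \in A i) l i in cost_le.
have f0 : f 0 = 0 by rewrite /f big1 // => i _; rewrite min_r.
have fM : f M = M.
  apply: eq_bigr => i ti; rewrite min_l // /M (bigD1 i) //= lerDl.
  exact: sumr_ge0.
have [rho] : exists2 rho, rho \in `[0, M] & f rho = cost t.
  apply: IVT; first exact: sumr_ge0.
    by apply: continuous_subspaceT; exact: continuous_sum_min.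
  by rewrite f0 fM ge_min cost_ge0 le_max cost_le orbT.
by rewrite in_itv /= => /andP[rho_ge0 _] frho; exists rho.
Qed.

Section Potential.
Context {V : {set N}} {t : Proj} {c : R}.
Hypotheses (V_approve : forall i, i \in V -> t \in A i) (cost_le : cost t <= c).

Local Notation v := (#|V|%:R : R).

Lemma pairmin_unaffordable {l : N -> R} :
  (forall i, 0 <= l i) -> \sum_(i | t \in A i) l i < cost t ->
  pairmin V l <= v * c.
Proof.
move=> l_ge0 unaff; apply: le_trans (pairmin_le_sum V l) _.
apply: ler_wpM2l; first exact: ler0n.
apply: le_trans (ler_psum_subpred V_approve l_ge0) _.
exact: ltW (lt_le_trans unaff cost_le).
Qed.

Lemma potential_step {W W' : {set Proj}} {l l' : N -> R} :
  (forall i, 0 <= l i) -> t \notin W -> cost t <= \sum_(i | t \in A i) l i ->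
  mes_step cost A W l W' l' ->
  2 * c * total_sat A V W + pairmin V l <= 2 * c * total_sat A V W' + pairmin V l'.
Proof.
move=> l_ge0 tW t_aff [t' [rho [t'W [rho_ge0 _] rho_min -> l'_def]]].
have -> : l' = pay (fun i => t' \in A i) rho l by rewrite l'_def.
have [rt t_rt] := exists_affordable l_ge0 t_aff.
have rho_le : rho <= rt := rho_min t rt tW t_rt.
pose F : R := \sum_(i in V) Num.min (l i) rho.
pose K : R := \sum_(i in V) (t' \in A i)%:R.
have F_le : F <= c.
  apply: (@le_trans _ _ (\sum_(i in V) Num.min (l i) rt)).
    by apply: ler_sum => i _; rewrite le_min !ge_min lexx rho_le orbT.
  apply: (le_trans _ cost_le); case: t_rt => rt_ge0 <-.
  by apply: ler_psum_subpred V_approve _ => i; rewrite le_min l_ge0.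
have K_ge0 : 0 <= K by apply: sumr_ge0 => i _; exact: ler0n.
have FK_le : F * K <= c * K := ler_wpM2r K_ge0 F_le.
have := pairmin_pay V (fun i => t' \in A i) rho l l_ge0 rho_ge0.
rewrite total_sat_setU1 // -/F -/K; lra.
Qed.

Lemma mes_reach_potential {W : {set Proj}} {l : N -> R} :
  mes_reach B cost A W l ->
  [\/ t \in W, v * v * share <= 2 * c * total_sat A V W + pairmin V l
    | v * (v * share - c) <= 2 * c * total_sat A V W].
Proof.
elim=> {W l} [|W l W' l' reach IH step].
  apply: Or32; rewrite pairmin_cst /total_sat big1 ?mulr0 ?add0r // => i _.
  by rewrite finset.set0I cards0.
have l_ge0 := mes_reach_ge0 reach.
have [t' [_ [t'W _ _ W'_def _]]] := step.
have W_sub : t \in W -> t \in W' by rewrite W'_def => tW; rewrite in_setU1 tW orbT.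
have sat_le : total_sat A V W <= total_sat A V W' :> R.
  by rewrite W'_def total_sat_setU1 // lerDl; apply: sumr_ge0 => i _.
have c_ge0 : 0 <= c := le_trans (cost_ge0 t) cost_le.
have keep_bound : v * (v * share - c) <= 2 * c * total_sat A V W ->
                  v * (v * share - c) <= 2 * c * total_sat A V W'.
  by move/le_trans; apply; apply: ler_wpM2l; rewrite ?mulr_ge0.
case: IH => [tW | IH | IH]; [exact/Or31/W_sub | | exact/Or33/keep_bound].
have [tW' | tW'] := boolP (t \in W'); first exact: Or31.
have tW : t \notin W by apply: contra tW'.
have [t_aff | t_unaff] := leP (cost t) (\sum_(i | t \in A i) l i).
  exact/Or32/(le_trans IH)/(potential_step l_ge0 tW t_aff step).
apply/Or33/keep_bound; have := pairmin_unaffordable l_ge0 t_unaff; lra.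
Qed.

Lemma mes_outcome_potential {W : {set Proj}} :
  mes_outcome B cost A W -> t \notin W ->
  v * (v * share - c) <= 2 * c * total_sat A V W.
Proof.
move=> [l [reach stopped]] tW.
have l_ge0 := mes_reach_ge0 reach.
have t_unaff : \sum_(i | t \in A i) l i < cost t.
  rewrite ltNge; apply/negP => /(exists_affordable l_ge0) [rho].
  exact: stopped tW.
case: (mes_reach_potential reach) => [tW' | pot | //]; first by rewrite tW' in tW.
have := pairmin_unaffordable l_ge0 t_unaff; lra.
Qed.

End Potential.

Lemma cohesive_approves {T : {set Proj}} {V : {set N}} {i : N} {t : Proj} :
  cohesive B cost A T V -> i \in V -> t \in T -> t \in A i.
Proof. by case=> /fintype.subsetP T_sub _ iV /T_sub /bigcapP; apply. Qed.

Lemma cohesive_costS_le {T : {set Proj}} {V : {set N}} :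
  0 < B -> cohesive B cost A T V -> costS cost T <= #|V|%:R * share.
Proof.
move=> B_gt0 [_ /(ler_wpM2r (ltW B_gt0))]; rewrite divfK ?gt_eqF //.
by move/le_trans; apply; rewrite mulrAC mulrA.
Qed.

Lemma total_sat_ge_card {T W : {set Proj}} {V : {set N}} :
  T \subset W -> (forall i, i \in V -> T \subset A i) ->
  #|T|%:R * #|V|%:R <= total_sat A V W :> R.
Proof.
move=> TW TA; rewrite mulr_natr -sumr_const; apply: ler_sum => i iV.
by rewrite ler_nat subset_leq_card // finset.subsetI TW TA.
Qed.

End MethodOfEqualShares.

Theorem theorem1 (R : realType) (N Proj : finType) (B : R) (cost : Proj -> R)
    (A : N -> {set Proj}) (hB : 0 < B) (hcost : forall t, 0 < cost t)
    (T : {set Proj}) (hT : T != finset.set0) (W : {set Proj}) :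
  mes_outcome B cost A W ->
  (((2%:R)^-1 * (costS cost T / max_cost cost T - 1))%:E
    <= prop_degree B cost A W T)%E.
Proof.
move=> mes_W; set c := max_cost cost T; set C := costS cost T.
apply: ereal_sup_ubound; exists (2%:R^-1 * (C / c - 1)) => // V V_coh.
set v : R := #|V|%:R.
have /finset.set0Pn [t0 t0T] := hT.
have cost_le_max t : t \in T -> cost t <= c by move=> tT; exact: le_bigmax_cond.
have c_gt0 : 0 < c := lt_le_trans (hcost t0) (cost_le_max t0 t0T).
have C_gt0 : 0 < C.
  by rewrite /C /costS (bigD1 t0) //= ltr_pwDl // sumr_ge0 // => t _; exact: ltW.
have C_le : C <= v * (B / n_voters R N) := cohesive_costS_le hB V_coh.
have v_gt0 : 0 < v.
  by rewrite lt0r ler0n andbT; apply: contraTneq C_le => ->; rewrite mul0r -ltNge.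
rewrite ge_min /avg_sat -/v !ler_pdivlMr //.
have [TW | /fintype.subsetPn [t tT tW]] := boolP (T \subset W).
  apply/orP; left; apply: total_sat_ge_card TW _ => i iV.
  by apply/fintype.subsetP => t tT; exact: cohesive_approves V_coh iV tT.
apply/orP; right.
have pot := mes_outcome_potential (ltW hB) (fun t => ltW (hcost t))
  (fun i iV => cohesive_approves V_coh iV tT) (cost_le_max t tT) mes_W tW.
have -> : 2%:R^-1 * (C / c - 1) * v = v * (C - c) / (2 * c).
  by field; rewrite gt_eqF.
rewrite ler_pdivrMr ?mulr_gt0 // [_ * (2 * c)]mulrC.
by apply: le_trans pot; apply: ler_wpM2l; [exact: ltW | lra].
Qed.
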